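(* For each $n$, consider the distributed system (under the RJSQ policy) and its synchronized service pool (SSP), as described in the context, both initially empty. Then the process $\Gamma^\star_n(t)=\sum_{k=1}^sW_{n,k}(t)-W^\star_n(t)$, $t\ge0$, has continuous, piecewise linear sample paths, and $\Gamma^\star_n(t)\ge0$ for all $t\ge0$.
   Context: Distributed system $n$: $s\ge2$ stations with single work-conserving FCFS servers, unlimited waiting room, service rates $0<\mu_1\le\cdots\le\mu_s$, $\mu=\sum_k\mu_k$. Customer $j$ appears at time $a_n(j)=\sum_{i\le j}z(i)/\lambda_n$ ($z(i)$ i.i.d. nonnegative with mean 1), has traveling delay vector $\sqrt n\boldsymbol\gamma(j)$ ($\boldsymbol\gamma(j)$ i.i.d. random vectors in $\mathbb R_+^s$ taking finitely many values $\boldsymbol d_1,\ldots,\boldsymbol d_b$), and is routed by the randomized join-the-shortest-queue (RJSQ) policy to a destination $\xi_n(j)\in\{1,\ldots,s\}$ (each customer is sent to station $k$ with probability depending on the ranking of the weighted queue lengths $Q_{n,\ell}/\mu_\ell$ at its appearance), arriving at station $\xi_n(j)$ at time $a_n(j)+\sqrt n\gamma_{\xi_n(j)}(j)$. The $i$th customer served at station $k$ has service requirement $w_k(i)$ (i.i.d. nonnegative, mean 1) and service time $w_k(i)/\mu_k$. $W_{n,k}(t)$ is the stationed workload at station $k$: the total unfinished service requirement (remaining service time multiplied by $\mu_k$) of customers present at station $k$ at time $t$. SSP $n$: a single station with one work-conserving FCFS server of rate $\mu$ and unlimited waiting room. For each customer $j$ of distributed system $n$ there is a counterpart that is of class $k$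 if $\xi_n(j)=k$, arrives at the SSP station at the same time $a_n(j)+\sqrt n\gamma_{\xi_n(j)}(j)$, and has the same service requirement (the $i$th class-$k$ customer requires $w_k(i)$, with service time $w_k(i)/\mu$). $W^\star_n(t)$ is the total unfinished service requirement of customers present at the SSP station at time $t$. *)

From HB Require Import structures.
From mathcomp Require Import all_boot all_order all_algebra.
From mathcomp Require Import all_classical all_reals all_analysis.
Set Implicit Arguments. Unset Strict Implicit. Unset Printing Implicit Defensive.
Import Order.TTheory GRing.Theory Num.Theory.
Import numFieldNormedType.Exports.
Local Open Scope classical_set_scope.
Local Open Scope ring_scope.

(* Customers are indexed by j : nat (j = 0 is the paper's customer 1).
   Appearance time  a_n(j) = (sum_{i <= j} z i) / lam.
   Customer j arrives at its destination xi j at time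
   a_n(j) + sqrt n * gam j (xi j). *)
Definition arr_time (R : realType) (s n : nat) (lam : R) (z : nat -> R)
    (gam : nat -> 'I_s -> R) (xi : nat -> 'I_s) (j : nat) : R :=
  (\sum_(0 <= i < j.+1) z i) / lam + Num.sqrt (n%:R) * gam j (xi j).

Definition n_arr_upto (R : realType) (s : nat) (arr : nat -> R)
    (xi : nat -> 'I_s) (k : 'I_s) (t : R) (J : nat) : nat :=
  count (fun j => (xi j == k) && (arr j <= t)) (iota 0 J).

(* Total service requirement brought to station k during [0, t]:
   under FCFS the customers arrived by time t are the first N_k(t) served
   ones, so this is  sum_{i < N_k(t)} w k i,  N_k(t) the number of
   customers that arrived at station k by time t (sup over J of the
   truncated counts). *)
Definition cum_work (R : realType) (s : nat) (arr : nat -> R)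
    (xi : nat -> 'I_s) (w : 'I_s -> nat -> R) (k : 'I_s) (t : R) : R :=
  sup [set (\sum_(0 <= i < n_arr_upto arr xi k t J) w k i) | J in [set: nat]].

(* Workload (unfinished service requirement) at time t of an initially
   empty single-server work-conserving station whose server depletes
   service requirement at rate c, given the cumulative requirement input
   A : the standard one-sided reflection of X(u) = A(u) - c u. *)
Definition workload (R : realType) (A : R -> R) (c t : R) : R :=
  let X := fun u => A u - c * u in
  X t - Num.min 0 (inf [set X u | u in [set u | 0 <= u <= t]]).

Definition W_station (R : realType) (s : nat) (mu : 'I_s -> R) (arr : nat -> R)
    (xi : nat -> 'I_s) (w : 'I_s -> nat -> R) (k : 'I_s) (t : R) : R :=
  workload (cum_work arr xi w k) (mu k) t.

Definition W_ssp (R : realType) (s : nat) (mu : 'I_s -> R) (arr : nat -> R)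
    (xi : nat -> 'I_s) (w : 'I_s -> nat -> R) (t : R) : R :=
  workload (fun u => \sum_(k < s) cum_work arr xi w k u) (\sum_(k < s) mu k) t.

Definition Gamma_star (R : realType) (s : nat) (mu : 'I_s -> R) (arr : nat -> R)
    (xi : nat -> 'I_s) (w : 'I_s -> nat -> R) (t : R) : R :=
  \sum_(k < s) W_station mu arr xi w k t - W_ssp mu arr xi w t.

Definition piecewise_linear (R : realType) (f : R -> R) : Prop :=
  forall T : R, 0 < T ->
    exists (m : nat) (tt : nat -> R),
      [/\ tt 0%N = 0, tt m = T,
          (forall i, (i < m)%N -> tt i < tt i.+1) &
          (forall i, (i < m)%N -> exists a b : R,
              forall x, tt i <= x <= tt i.+1 -> f x = a * x + b)].

From HB Require Import structures.
From mathcomp Require Import all_boot all_order all_algebra.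
From mathcomp Require Import all_classical all_reals all_analysis.
From mathcomp Require Import ring lra.
Import Order.TTheory GRing.Theory Num.Theory.
Import numFieldNormedType.Exports.
Local Open Scope classical_set_scope.
Local Open Scope ring_scope.

Set Implicit Arguments.
Unset Strict Implicit.

(* Every workload is the one-sided reflection W = X - min(0, inf_[0,t] X) of its
   netput X(u) = A(u) - c u, and the netputs of the stations add up to the netput
   of the pool.  Hence Gamma = min(0, I) - sum_k min(0, I_k), where I and I_k are
   the running infima of the netputs; as the infimum of a sum dominates the sum
   of the infima, Gamma >= 0.  A running infimum is c-Lipschitz in t, which gives
   continuity.  Between two consecutive arrivals every input A_k is constant, so
   each running infimum equals min(its value at the last arrival, A_k - c_k t);
   thus Gamma is obtained from affine functions by min, sums and scalings, and
   only finitely many arrivals occur before any time T. *)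

Section PiecewiseLinear.
Variable R : realType.
Implicit Types (f g : R -> R) (a b c x : R).

Definition affine_on f a b :=
  exists p q : R, forall x, a <= x <= b -> f x = p * x + q.

Inductive pwl_on f : R -> R -> Prop :=
| affine_piece a b : a < b -> affine_on f a b -> pwl_on f a b
| join_pieces a c b :
    pwl_on f a c -> pwl_on f c b -> pwl_on f a b.

Lemma affine_onS f a b a' b' :
  a <= a' -> b' <= b -> affine_on f a b -> affine_on f a' b'.
Proof.
move=> aa' b'b [p [q fE]]; exists p, q => x /andP[a'x xb'].
by apply: fE; rewrite (le_trans aa' a'x) (le_trans xb' b'b).
Qed.

Lemma eq_affine_on f g a b :
  (forall x, a <= x <= b -> f x = g x) -> affine_on f a b -> affine_on g a b.
Proof. by move=> fg [p [q fE]]; exists p, q => x xab; rewrite -fg // fE. Qed.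

Lemma affine_on_convex f a b x : affine_on f a b -> a <= x <= b ->
  f x * (b - a) = (b - x) * f a + (x - a) * f b.
Proof.
move=> [p [q fE]] xab; have /andP[ax xb] := xab.
by rewrite !fE ?xab ?lexx ?(le_trans ax xb) //; ring.
Qed.

Lemma affine_on_root f a b : a < b -> affine_on f a b -> f a * f b < 0 ->
  exists2 c, a < c < b & f c = 0.
Proof.
move=> ab faff neg.
have fab : f a - f b != 0.
  by apply: contraTneq neg => /subr0_eq ->; rewrite -expr2 -leNgt sqr_ge0.
set r := f a / (f a - f b).
have rE : r * (f a - f b) = f a by rewrite divfK.
have r_gt0 : 0 < r by nra.
have r_lt1 : r < 1 by nra.
exists (a + r * (b - a)); first by apply/andP; split; nra.
have xab : a <= a + r * (b - a) <= b by apply/andP; split; nra.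
have := affine_on_convex faff xab.
have -> : (b - (a + r * (b - a))) * f a + (a + r * (b - a) - a) * f b
          = (b - a) * (f a - r * (f a - f b)) by ring.
rewrite rE subrr mulr0 => /eqP; rewrite mulf_eq0 subr_eq0 (gt_eqF ab) orbF.
by move/eqP.
Qed.

Lemma affine_on_norm f a b : a < b -> affine_on f a b ->
  (0 <= f a) && (0 <= f b) || (f a <= 0) && (f b <= 0) ->
  affine_on (fun x => `|f x|) a b.
Proof.
move=> ab; wlog fpos : f / (0 <= f a) && (0 <= f b).
  move=> W faff /orP[fpos|fneg]; first by apply: W; rewrite ?fpos.
  apply: (eq_affine_on (f := fun x => `|- f x|)) => [x _|]; first by rewrite normrN.
  have [p [q fE]] := faff.
  apply: W; rewrite ?oppr_ge0 ?fneg //.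
  by exists (- p), (- q) => x xab; rewrite fE //; ring.
move=> faff _; have /andP[fa fb] := fpos.
suff fx_ge0 x : a <= x <= b -> 0 <= f x.
  by apply: eq_affine_on faff => x /fx_ge0 /ger0_norm.
move=> xab; have /andP[ax xb] := xab.
have : 0 <= (b - x) * f a + (x - a) * f b by apply: addr_ge0; apply: mulr_ge0; lra.
by rewrite -(affine_on_convex faff xab) pmulr_lge0 ?subr_gt0.
Qed.

Lemma pwl_on_lt f a b : pwl_on f a b -> a < b.
Proof. by elim=> // a' c b' _ ac _ cb; exact: lt_trans ac cb. Qed.

Lemma eq_pwl_on f g a b :
  (forall x, a <= x <= b -> f x = g x) -> pwl_on f a b -> pwl_on g a b.
Proof.
move=> + fpwl; elim: fpwl => {a b} [a b ab faff|a c b fac IHac fcb IHcb] fg.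
  by apply: affine_piece => //; exact: eq_affine_on faff.
have ac := pwl_on_lt fac; have cb := pwl_on_lt fcb.
apply: (join_pieces (c := c)); [apply: IHac | apply: IHcb] => x /andP[ax xb];
  apply: fg; first by rewrite ax (le_trans xb (ltW cb)).
by rewrite xb (le_trans (ltW ac) ax).
Qed.

Lemma pwl_onS f a b a' b' :
  a <= a' -> a' < b' -> b' <= b -> pwl_on f a b -> pwl_on f a' b'.
Proof.
move=> + + + fpwl.
elim: fpwl a' b' => {a b} [a b ab faff|a c b _ IHac _ IHcb] a' b' aa' a'b' b'b.
  by apply: affine_piece => //; exact: affine_onS faff.
have [b'c|cb'] := leP b' c; first exact: IHac.
have [ca'|a'c] := leP c a'; first exact: IHcb.
by apply: (join_pieces (c := c)); [apply: IHac | apply: IHcb]; rewrite ?lexx.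
Qed.

Lemma pwl_onZ k f a b : pwl_on f a b -> pwl_on (fun x => k * f x) a b.
Proof.
elim=> {a b} [a b ab [p [q fE]]|a c b _ IHac _ IHcb]; last exact: join_pieces IHac IHcb.
by apply: affine_piece => //; exists (k * p), (k * q) => x xab; rewrite fE //; ring.
Qed.

Lemma pwl_onD_affine f g a b :
  affine_on f a b -> pwl_on g a b -> pwl_on (fun x => f x + g x) a b.
Proof.
move=> + gpwl; elim: gpwl => {a b} [a b ab [p [q gE]]|a c b gac IHac gcb IHcb] faff.
  have [p' [q' fE]] := faff.
  by apply: affine_piece => //; exists (p' + p), (q' + q) => x xab; rewrite fE ?gE //; ring.
have ac := pwl_on_lt gac; have cb := pwl_on_lt gcb.
apply: (join_pieces (c := c)); [apply: IHac | apply: IHcb];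
  by apply: affine_onS faff; rewrite ?lexx ?ltW.
Qed.

Lemma pwl_onD f g a b :
  pwl_on f a b -> pwl_on g a b -> pwl_on (fun x => f x + g x) a b.
Proof.
move=> fpwl; elim: fpwl g => {a b} [a b ab faff|a c b fac IHac fcb IHcb] g gpwl.
  exact: pwl_onD_affine.
have ac := pwl_on_lt fac; have cb := pwl_on_lt fcb.
apply: (join_pieces (c := c)); [apply: IHac | apply: IHcb];
  by apply: pwl_onS gpwl; rewrite ?lexx ?ltW.
Qed.

Lemma pwl_on_line p q a b : a < b -> pwl_on (fun x => p * x + q) a b.
Proof. by move=> ab; apply: affine_piece => //; exists p, q. Qed.

Lemma pwl_on_cst q a b : a < b -> pwl_on (fun=> q) a b.
Proof. by move/(pwl_on_line 0 q); apply: eq_pwl_on => x _; rewrite mul0r add0r. Qed.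

Lemma pwl_on_sum (I : Type) (r : seq I) (F : I -> R -> R) a b : a < b ->
  (forall i, pwl_on (F i) a b) -> pwl_on (fun x => \sum_(i <- r) F i x) a b.
Proof.
move=> ab Fpwl; elim: r => [|i r IHr].
  by apply: eq_pwl_on (pwl_on_cst 0 ab) => x _; rewrite big_nil.
by apply: eq_pwl_on (pwl_onD (Fpwl i) IHr) => x _; rewrite big_cons.
Qed.

Lemma pwl_on_norm_affine f a b :
  a < b -> affine_on f a b -> pwl_on (fun x => `|f x|) a b.
Proof.
move=> ab faff; have [opp|same] := ltP (f a * f b) 0.
  have [c /andP[ac cb] fc0] := affine_on_root ab faff opp.
  apply: (join_pieces (c := c)); apply: affine_piece => //;
    (apply: affine_on_norm => //; first by apply: affine_onS faff; rewrite ?lexx ?ltW);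
    by rewrite fc0 lexx ?andbT ?andTb; case: lerP => // /ltW ->; rewrite orbT.
apply: affine_piece => //; apply: affine_on_norm => //.
case: (lerP 0 (f a)) => fa; case: (lerP 0 (f b)) => fb //=.
- by rewrite (ltW fb) andbT; nra.
- by rewrite (ltW fa) /=; nra.
- by rewrite (ltW fa) (ltW fb).
Qed.

Lemma pwl_on_norm f a b : pwl_on f a b -> pwl_on (fun x => `|f x|) a b.
Proof.
elim=> {a b} [a b ab faff|a c b _ IHac _ IHcb]; first exact: pwl_on_norm_affine.
exact: join_pieces IHac IHcb.
Qed.

Lemma pwl_on_min f g a b :
  pwl_on f a b -> pwl_on g a b -> pwl_on (fun x => Num.min (f x) (g x)) a b.
Proof.
move=> fpwl gpwl.
have fgpwl := pwl_onD fpwl gpwl.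
have dpwl := pwl_on_norm (pwl_onD fpwl (pwl_onZ (-1) gpwl)).
apply: eq_pwl_on (pwl_onZ 2^-1 (pwl_onD fgpwl (pwl_onZ (-1) dpwl))) => x _.
by rewrite minr_absE !mulN1r mulrC.
Qed.

Lemma pwl_on_breakpoints f (S : seq R) a b : a < b ->
  (forall a' b', a <= a' -> a' < b' -> b' <= b ->
     (forall x, x \in S -> ~~ (a' < x < b')) -> pwl_on f a' b') ->
  pwl_on f a b.
Proof.
elim: S a b => [|y S IHS] a b ab fpwl; first exact: fpwl.
have [/andP[ay yb]|yout] := boolP (a < y < b).
  apply: (join_pieces (c := y)); apply: IHS => // a' b' aa' a'b' b'b Sfree.
  - apply: fpwl; rewrite ?(le_trans b'b (ltW yb)) // => x; rewrite inE.
    by case/orP => [/eqP ->|/Sfree//]; rewrite negb_and -!leNgt b'b orbT.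
  - apply: fpwl; rewrite ?(le_trans (ltW ay) aa') // => x; rewrite inE.
    by case/orP => [/eqP ->|/Sfree//]; rewrite negb_and -!leNgt aa'.
apply: IHS => // a' b' aa' a'b' b'b Sfree; apply: fpwl => // x; rewrite inE.
case/orP => [/eqP ->|/Sfree//]; apply: contra yout => /andP[a'y yb'].
by rewrite (le_lt_trans aa' a'y) (lt_le_trans yb' b'b).
Qed.

Lemma pwl_on_partition f a b : pwl_on f a b ->
  exists (m : nat) (t : nat -> R),
    [/\ t 0%N = a, t m = b, (forall i, (i < m)%N -> t i < t i.+1) &
        (forall i, (i < m)%N -> affine_on f (t i) (t i.+1))].
Proof.
elim=> {a b} [a b ab faff|a c b _ [m1 [t1 [t10 t1m t1lt t1aff]]]
                              _ [m2 [t2 [t20 t2m t2lt t2aff]]]].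
  by exists 1%N, (fun i => if i == 0%N then a else b); split => // -[].
pose t i := if (i <= m1)%N then t1 i else t2 (i - m1)%N.
have tl i : (i <= m1)%N -> t i = t1 i by rewrite /t => ->.
have tr i : (m1 <= i)%N -> t i = t2 (i - m1)%N.
  rewrite /t; case: (leqP i m1) => // i_le_m1 m1_le_i.
  have -> : i = m1 by apply/eqP; rewrite eqn_leq i_le_m1.
  by rewrite subnn t1m t20.
exists (m1 + m2)%N, t; split; first by rewrite tl.
- by rewrite tr ?leq_addr // addKn.
- move=> i im; have [i_lt|i_ge] := ltnP i m1; first by rewrite !tl ?t1lt ?(ltnW i_lt).
  by rewrite !tr ?(leqW i_ge) // subSn // t2lt // ltn_subLR.
- move=> i im; have [i_lt|i_ge] := ltnP i m1.
    by rewrite !tl ?(ltnW i_lt) //; exact: t1aff.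
  by rewrite !tr ?(leqW i_ge) // subSn //; apply: t2aff; rewrite ltn_subLR.
Qed.

End PiecewiseLinear.

Section NetputInfimum.
Variable R : realType.

Definition netput_inf (A : R -> R) (c t : R) : R :=
  inf [set A u - c * u | u in [set u | 0 <= u <= t]].

Lemma workloadE (A : R -> R) (c t : R) :
  workload A c t = A t - c * t - Num.min 0 (netput_inf A c t).
Proof. by []. Qed.

Lemma le_line_left_end (x K c a b : R) : 0 <= c -> a < b ->
  (forall u, a <= u < b -> x <= K - c * u) -> x <= K - c * b.
Proof.
move=> c_ge0 ab xle; apply/ler_addgt0Pr => e e_gt0.
set d := e / (c + 1).
have d_gt0 : 0 < d by rewrite divr_gt0 // ltr_wpDl.
have dE : c * d + d = e by rewrite /d; field; rewrite lt0r_neq0 // ltr_wpDl.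
set u := Num.max a (b - d).
have u_ab : a <= u < b by rewrite le_max lexx /= gt_max ab /= ltrBlDr ltrDl.
have : c * (b - d) <= c * u by rewrite ler_wpM2l // le_max lexx orbT.
by have := xle u u_ab; lra.
Qed.

Variables (A : R -> R) (c : R).
Hypothesis A_nondecr : forall u v, 0 <= u -> u <= v -> A u <= A v.
Hypothesis c_ge0 : 0 <= c.

Lemma netput_inf_le t u : 0 <= u <= t -> netput_inf A c t <= A u - c * u.
Proof.
move=> /andP[u_ge0 ut]; apply: ge_inf; last by exists u => //=; rewrite u_ge0.
exists (A 0 - c * t) => _ [v /andP[v_ge0 vt] <-].
have := A_nondecr (lexx 0) v_ge0; have := ler_wpM2l c_ge0 vt; lra.
Qed.

Lemma netput_inf_glb t x : 0 <= t ->
  (forall u, 0 <= u <= t -> x <= A u - c * u) -> x <= netput_inf A c t.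
Proof.
move=> t_ge0 xle; apply: lb_le_inf; first by exists (A 0 - c * 0), 0 => //=; rewrite lexx.
by move=> _ [u ut <-]; exact: xle.
Qed.

Lemma netput_inf_antitone t t' : 0 <= t -> t <= t' ->
  netput_inf A c t' <= netput_inf A c t.
Proof.
move=> t_ge0 tt'; apply: netput_inf_glb => // u /andP[u_ge0 ut].
by apply: netput_inf_le; rewrite u_ge0 (le_trans ut tt').
Qed.

Lemma netput_inf_drop t t' : 0 <= t -> t <= t' ->
  netput_inf A c t - c * (t' - t) <= netput_inf A c t'.
Proof.
move=> t_ge0 tt'; apply: netput_inf_glb => [|u /andP[u_ge0 ut']]; first exact: le_trans tt'.
have [ut|tu] := leP u t.
  have := netput_inf_le (t := t) (u := u); rewrite u_ge0 ut => /(_ isT).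
  have : 0 <= c * (t' - t) by rewrite mulr_ge0 // subr_ge0.
  lra.
have := netput_inf_le (t := t) (u := t); rewrite t_ge0 lexx => /(_ isT).
have := A_nondecr t_ge0 (ltW tu); have := ler_wpM2l c_ge0 ut'.
lra.
Qed.

Lemma netput_inf_lipschitz : c.-lipschitz_[set t | 0 <= t] (netput_inf A c).
Proof.
move=> [t t'] [/= t_ge0 t'_ge0].
wlog tt' : t t' t_ge0 t'_ge0 / t <= t'.
  move=> W; have [|t't] := leP t t'; first exact: W.
  by rewrite distrC (distrC t); apply: W => //; exact: ltW.
have := netput_inf_antitone t_ge0 tt'; have := netput_inf_drop t_ge0 tt'.
rewrite ger0_norm ?subr_ge0 ?netput_inf_antitone // ler0_norm ?subr_le0 //.
lra.
Qed.

Lemma netput_inf_step a b t : 0 <= a -> a < b ->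
  (forall u, a <= u < b -> A u = A a) -> a <= t <= b ->
  netput_inf A c t = Num.min (netput_inf A c a) (A a - c * t).
Proof.
move=> a_ge0 ab Aconst /andP[a_le_t t_le_b]; have t_ge0 := le_trans a_ge0 a_le_t.
apply/eqP; rewrite eq_le le_min netput_inf_antitone //=; apply/andP; split.
  suff le_line u : a <= u < b -> u <= t -> netput_inf A c t <= A a - c * u.
    (* [A] may jump at [b], so for [t = b] the bound is obtained as [u] tends to [b]. *)
    have [tltb|bt] := ltP t b; first by apply: le_line; rewrite ?a_le_t.
    apply: (le_line_left_end c_ge0 (lt_le_trans ab bt)) => u /andP[au ut].
    by apply: le_line (ltW ut); rewrite au (lt_le_trans ut t_le_b).
  move=> ub ut; rewrite -(Aconst u ub); apply: netput_inf_le.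
  by case/andP: ub => au _; rewrite ut (le_trans a_ge0 au).
apply: netput_inf_glb => // u /andP[u_ge0 ut]; rewrite ge_min.
have [ua|au] := leP u a; first by rewrite netput_inf_le // u_ge0.
have := A_nondecr a_ge0 (ltW au); have := ler_wpM2l c_ge0 ut.
by move=> h1 h2; apply/orP; right; lra.
Qed.

End NetputInfimum.

Lemma klipschitz_within_continuous (K : realFieldType) (V W : normedModType K)
    (k : K) (A : set V) (f : V -> W) :
  k.-lipschitz_A f -> {within A, continuous f}.
Proof.
move=> flip; apply/subspace_continuousP => x Ax; apply/cvgrPdist_lt => e e_gt0.
have [k_le0|k_gt0] := leP k 0.
  rewrite near_withinE; apply: nearW => y Ay; apply: le_lt_trans e_gt0.
  exact: le_trans (flip (x, y) (conj Ax Ay)) (mulr_le0_ge0 k_le0 (normr_ge0 _)).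
rewrite near_withinE; near=> y => Ay.
apply: le_lt_trans (flip (x, y) (conj Ax Ay)) _; rewrite /= -ltr_pdivlMl //.
near: y; apply: cvgr_dist_lt => //.
by apply: mulr_gt0; rewrite ?invr_gt0.
Unshelve. all: by end_near.
Qed.

Lemma dist_min0 (R : realDomainType) (x y : R) :
  `|Num.min 0 x - Num.min 0 y| <= `|x - y|.
Proof.
have := ler_norm (x - y); have := ler_norm (y - x); rewrite distrC ler_norml.
by case: (lerP 0 x) => x0; case: (lerP 0 y) => y0 h1 h2; apply/andP; split; lra.
Qed.

Section WorkloadGap.
Variable R : realType.
Variables (s : nat) (A : 'I_s -> R -> R) (c : 'I_s -> R).

(* [Gamma_star mu arr xi w] is [workload_gap (cum_work arr xi w) mu] by definition. *)
Definition workload_gap (t : R) : R :=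
  \sum_(k < s) workload (A k) (c k) t
  - workload (fun u => \sum_(k < s) A k u) (\sum_(k < s) c k) t.

Local Notation A_tot := (fun u => \sum_(k < s) A k u).
Local Notation c_tot := (\sum_(k < s) c k).

Lemma workload_gapE t : workload_gap t =
  Num.min 0 (netput_inf A_tot c_tot t) - \sum_(k < s) Num.min 0 (netput_inf (A k) (c k) t).
Proof.
rewrite /workload_gap; under eq_bigr do rewrite workloadE.
by rewrite workloadE !sumrB mulr_suml; ring.
Qed.

Hypothesis A_nondecr : forall k u v, 0 <= u -> u <= v -> A k u <= A k v.
Hypothesis c_ge0 : forall k, 0 <= c k.

Let A_tot_nondecr u v : 0 <= u -> u <= v -> A_tot u <= A_tot v.
Proof. by move=> u_ge0 uv; apply: ler_sum => k _; exact: A_nondecr. Qed.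

Let c_tot_ge0 : 0 <= c_tot.
Proof. exact: sumr_ge0. Qed.

Lemma sum_netput_inf_le t : 0 <= t ->
  \sum_(k < s) netput_inf (A k) (c k) t <= netput_inf A_tot c_tot t.
Proof.
move=> t_ge0; apply: netput_inf_glb => // u ut.
rewrite mulr_suml -sumrB; apply: ler_sum => k _.
exact: (netput_inf_le (A_nondecr k) (c_ge0 k) ut).
Qed.

Lemma workload_gap_ge0 t : 0 <= t -> 0 <= workload_gap t.
Proof.
move=> t_ge0; rewrite workload_gapE subr_ge0 le_min.
have -> : \sum_(k < s) Num.min 0 (netput_inf (A k) (c k) t) <= 0.
  by apply: sumr_le0 => k _; rewrite ge_min lexx.
apply: le_trans (sum_netput_inf_le t_ge0).
by apply: ler_sum => k _; rewrite ge_min lexx orbT.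
Qed.

Lemma workload_gap_lipschitz :
  (c_tot + c_tot).-lipschitz_[set t | 0 <= t] workload_gap.
Proof.
move=> [t t'] tt'; rewrite /= !workload_gapE.
set m0 := fun (A' : R -> R) c' t => Num.min 0 (netput_inf A' c' t).
have -> : m0 A_tot c_tot t - \sum_(k < s) m0 (A k) (c k) t
          - (m0 A_tot c_tot t' - \sum_(k < s) m0 (A k) (c k) t')
        = (m0 A_tot c_tot t - m0 A_tot c_tot t')
          - \sum_(k < s) (m0 (A k) (c k) t - m0 (A k) (c k) t').
  by rewrite sumrB; ring.
rewrite mulrDl.
apply: le_trans (ler_normB _ _) _; apply: lerD.
  apply: le_trans (dist_min0 _ _) _.
  exact: netput_inf_lipschitz A_tot_nondecr c_tot_ge0 _ tt'.
apply: le_trans (ler_norm_sum _ _ _) _; rewrite mulr_suml; apply: ler_sum => k _.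
apply: le_trans (dist_min0 _ _) _.
exact: netput_inf_lipschitz (A_nondecr k) (c_ge0 k) _ tt'.
Qed.

Lemma pwl_on_workload_gap a b : 0 <= a -> a < b ->
  (forall k u, a <= u < b -> A k u = A k a) -> pwl_on workload_gap a b.
Proof.
move=> a_ge0 ab Aconst.
have pwl_min0_step (A' : R -> R) c' :
    pwl_on (fun t => Num.min 0 (Num.min (netput_inf A' c' a) (A' a - c' * t))) a b.
  apply: pwl_on_min; first exact: pwl_on_cst.
  apply: pwl_on_min; first exact: pwl_on_cst.
  by apply: eq_pwl_on (pwl_on_line (- c') (A' a) ab) => t _; ring.
have pwl_sum := pwl_on_sum (index_enum _) ab (fun k => pwl_min0_step (A k) (c k)).
apply: eq_pwl_on (pwl_onD (pwl_min0_step A_tot c_tot) (pwl_onZ (-1) pwl_sum)) => t tab.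
rewrite workload_gapE mulN1r.
rewrite (netput_inf_step A_tot_nondecr c_tot_ge0 a_ge0 ab _ tab); last first.
  by move=> u uab; apply: eq_bigr => k _; exact: Aconst.
congr (_ - _); apply: eq_bigr => k _.
by rewrite (netput_inf_step (A_nondecr k) (c_ge0 k) a_ge0 ab (Aconst k) tab).
Qed.

End WorkloadGap.

Section CumulativeWork.
Variable R : realType.
Variables (s : nat) (arr : nat -> R) (xi : nat -> 'I_s) (w : 'I_s -> nat -> R).
Hypothesis w_ge0 : forall k i, 0 <= w k i.

Local Notation N k t J := (n_arr_upto arr xi k t J).

Lemma n_arr_upto_homo_bound k t J J' : (J <= J')%N -> (N k t J <= N k t J')%N.
Proof. by move=> JJ'; rewrite /n_arr_upto -(subnKC JJ') iotaD count_cat leq_addr. Qed.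

Lemma n_arr_upto_homo_time k t t' J : t <= t' -> (N k t J <= N k t' J)%N.
Proof. by move=> tt'; apply: sub_count => j /= /andP[-> /le_trans ->]. Qed.

Lemma n_arr_upto_stable k t J J' : (forall j, (J <= j)%N -> t < arr j) ->
  (J <= J')%N -> N k t J' = N k t J.
Proof.
move=> late JJ'; rewrite /n_arr_upto -(subnKC JJ') iotaD count_cat -[RHS]addn0.
congr addn; apply/eqP; rewrite eqn0Ngt -has_count; apply/hasPn => j.
by rewrite mem_iota add0n => /andP[/late/lt_geF -> _]; rewrite andbF.
Qed.

Lemma cum_workE k t J : (forall j, (J <= j)%N -> t < arr j) ->
  cum_work arr xi w k t = \sum_(0 <= i < N k t J) w k i.
Proof.
move=> late; set F := fun J' => \sum_(0 <= i < N k t J') w k i.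
have F_le J' : F J' <= F J.
  apply: (nondecreasing_series (P := xpredT)) => [i _ _ //|].
  rewrite -(n_arr_upto_stable k late (leq_maxl J J')).
  by apply: n_arr_upto_homo_bound; exact: leq_maxr.
apply: le_anti; apply/andP; split.
  by apply: ge_sup; [exists (F 0%N), 0%N | move=> _ [J' _ <-]; exact: F_le].
by apply: ub_le_sup; [exists (F J) => _ [J' _ <-]; exact: F_le | exists J].
Qed.

Hypothesis arr_late : forall T, exists J, forall j, (J <= j)%N -> T < arr j.

Lemma cum_work_nondecr k u v : u <= v -> cum_work arr xi w k u <= cum_work arr xi w k v.
Proof.
move=> uv; have [J late] := arr_late v.
have late_u j : (J <= j)%N -> u < arr j by move/late; exact: le_lt_trans.
rewrite (cum_workE k late) (cum_workE k late_u).
by apply: (nondecreasing_series (P := xpredT)) => //; exact: n_arr_upto_homo_time.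
Qed.

Lemma cum_work_const k a b J : (forall j, (J <= j)%N -> b < arr j) ->
  (forall j, (j < J)%N -> ~~ (a < arr j < b)) ->
  forall u, a <= u < b -> cum_work arr xi w k u = cum_work arr xi w k a.
Proof.
move=> late quiet u /andP[au ub].
have late_u j : (J <= j)%N -> u < arr j by move/late; exact: lt_trans.
have late_a j : (J <= j)%N -> a < arr j by move/late_u; exact: le_lt_trans.
rewrite (cum_workE k late_u) (cum_workE k late_a); congr (\sum_(0 <= i < _) _).
apply: eq_in_count => j; rewrite mem_iota add0n => /andP[_ /quiet].
rewrite negb_and -!leNgt => /orP[ja|bj] /=; first by rewrite ja (le_trans ja au).
by rewrite (lt_geF (lt_le_trans ub bj)) (lt_geF (le_lt_trans au (lt_le_trans ub bj))).
Qed.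

Lemma pwl_on_cum_work_gap (c : 'I_s -> R) T : (forall k, 0 <= c k) -> 0 < T ->
  pwl_on (workload_gap (cum_work arr xi w) c) 0 T.
Proof.
move=> c_ge0 T_gt0; have [J late] := arr_late T.
apply: (pwl_on_breakpoints (S := map arr (iota 0 J))) => // a b a_ge0 ab bT quiet.
apply: pwl_on_workload_gap => // [k u v _|k]; first exact: cum_work_nondecr.
apply: cum_work_const => [j /late /(le_lt_trans bT)//|j jJ].
by apply: quiet; apply/mapP; exists j; rewrite // mem_iota.
Qed.

End CumulativeWork.

Lemma arr_time_late (R : realType) (s n : nat) (lam : R) (z : nat -> R)
    (gam : nat -> 'I_s -> R) (xi : nat -> 'I_s) :
  0 < lam -> (forall i, 0 <= z i) ->
  (forall M : R, exists J : nat, M < \sum_(0 <= i < J) z i) ->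
  (forall j k, 0 <= gam j k) ->
  forall T, exists J, forall j, (J <= j)%N -> T < arr_time n lam z gam xi j.
Proof.
move=> lam_gt0 z_ge0 z_unbounded gam_ge0 T; have [J TJ] := z_unbounded (T * lam).
exists J => j Jj; rewrite /arr_time.
have partial_z_le : \sum_(0 <= i < J) z i <= \sum_(0 <= i < j.+1) z i.
  exact: (nondecreasing_series (P := xpredT)) (leqW Jj).
apply: (@lt_le_trans _ _ ((\sum_(0 <= i < j.+1) z i) / lam)).
  by rewrite ltr_pdivlMr //; exact: lt_le_trans TJ partial_z_le.
by rewrite lerDl mulr_ge0 ?sqrtr_ge0.
Qed.

Theorem proposition3 (R : realType) (s : nat) (hs : (2 <= s)%N)
    (mu : 'I_s -> R) (hmu : forall k, 0 < mu k)
    (hmono : forall k l : 'I_s, (k <= l)%N -> mu k <= mu l)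
    (n : nat) (lam : R) (hlam : 0 < lam)
    (z : nat -> R) (hz : forall i, 0 <= z i)
    (hzdiv : forall M : R, exists J : nat, M < \sum_(0 <= i < J) z i)
    (b : nat) (d : 'I_b -> 'I_s -> R) (hd : forall l k, 0 <= d l k)
    (gam : nat -> 'I_s -> R) (hgam : forall j, exists l, gam j = d l)
    (xi : nat -> 'I_s)
    (w : 'I_s -> nat -> R) (hw : forall k i, 0 <= w k i) :
  let arr := arr_time n lam z gam xi in
  let G := Gamma_star mu arr xi w in
  [/\ {within [set t : R | 0 <= t], continuous G},
      piecewise_linear G &
      forall t : R, 0 <= t -> 0 <= G t].
Proof.
move=> arr G.
have gam_ge0 j k : 0 <= gam j k by have [l ->] := hgam j; exact: hd.
have late := arr_time_late n xi hlam hz hzdiv gam_ge0.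
have A_nondecr k u v : 0 <= u -> u <= v -> cum_work arr xi w k u <= cum_work arr xi w k v.
  by move=> _; exact: cum_work_nondecr.
have mu_ge0 k : 0 <= mu k by exact: ltW.
split.
- exact: klipschitz_within_continuous (workload_gap_lipschitz A_nondecr mu_ge0).
- by move=> T T_gt0; exact: pwl_on_partition (pwl_on_cum_work_gap xi hw late mu_ge0 T_gt0).
- by move=> t t_ge0; exact: (workload_gap_ge0 A_nondecr mu_ge0 t_ge0).
Qed.
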